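(* For every integer $m\ge0$, the following identity of rational functions in indeterminates $x,y$ holds: $$\sum_{r=0}^{m}\sum_{s=0}^{m-r}\binom{m-r+1}{s}\binom{m-s}{r}\frac{x^ry^s}{(1-x)^{r+s}(1-y)^{r+s}}=\frac{1-x^{m+2}y^{m+2}-x(1-x^{m+1}y^{m+1})-(1-xy)y^{m+1}}{(1-xy)(1-x)^{m+1}(1-y)^{m+1}}.$$ *)

(* Rational functions in two indeterminates x, y over Q:
   the fraction field of Q[x][y] = {poly {poly rat}}. *)
From mathcomp Require Import all_boot all_order all_algebra.
From mathcomp Require Export fraction.
Set Implicit Arguments. Unset Strict Implicit. Unset Printing Implicit Defensive.
Import GRing.Theory.
Local Open Scope ring_scope.

Definition Qxy : idomainType := {poly {poly rat}}.
Definition Qfxy : fieldType := {fraction Qxy}.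
(* the indeterminate x (inner variable, as a constant in y) *)
Definition X : Qfxy := FracField.tofrac (('X : {poly rat})%:P : Qxy).
Definition Y : Qfxy := FracField.tofrac ('X : Qxy).

(* With w = 1/((1-x)(1-y)), a = x w and b = y w, every summand is
   C(m-r+1,s) C(m-s,r) a^r b^s.  Adding the single extra nonzero term b^(m+1)
   (at r = 0, s = m+1) turns the triangular sum into a box sum G_m, and Pascal's
   rule in both binomial factors gives G_(m+2) + a b G_m = (1+a+b) G_(m+1).
   The roots of t^2 - (1+a+b) t + a b are w and x y w, so G_m is a combination
   of their powers determined by G_0 = 1 + b and G_1 = 1 + a + 2b + b^2;
   subtracting b^(m+1) gives the right-hand side. *)

From mathcomp Require Import all_boot all_order all_algebra.
From mathcomp Require Import ring zify.
Set Implicit Arguments.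
Unset Strict Implicit.
Unset Printing Implicit Defensive.
Import GRing.Theory.
Local Open Scope ring_scope.

Definition binprod (m r s : nat) : nat := 'C(m - r + 1, s) * 'C(m - s, r).

Lemma binprod0s m s : binprod m 0 s = 'C(m.+1, s).
Proof. by rewrite /binprod subn0 bin0 muln1 addn1. Qed.

Lemma binprodr0 m r : binprod m r 0 = 'C(m, r).
Proof. by rewrite /binprod subn0 bin0 mul1n. Qed.

Lemma binprod_eq0 m r s :
  (m < r + s)%N -> (r, s) != (0%N, m.+1) -> binprod m r s = 0%N.
Proof.
move=> hrs hne; rewrite /binprod; case: (leqP s m) => hs.
  by rewrite [X in (_ * X)%N]bin_small ?muln0 //; lia.
rewrite (_ : (m - s = 0)%N) ?bin0n; last by lia.
case: r hrs hne => [|r] hrs hne; last by rewrite muln0.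
rewrite bin_small ?mul0n //; move: hne; rewrite xpair_eqE eqxx /=; lia.
Qed.

Lemma binomial_product_pascal p q r s :
  ('C(p.+1, s.+1) * 'C(q.+1, r.+1) + 'C(p, s) * 'C(q, r)
   = 'C(p, s.+1) * 'C(q, r.+1) + 'C(p.+1, s.+1) * 'C(q, r) + 'C(p, s) * 'C(q.+1, r.+1))%N.
Proof. by rewrite !binS; ring. Qed.

Lemma binprod_pascal m r s :
  (binprod m.+2 r.+1 s.+1 + binprod m r s
   = binprod m.+1 r.+1 s.+1 + binprod m.+1 r s.+1 + binprod m.+1 r.+1 s)%N.
Proof.
rewrite /binprod; case: (leqP r m) => hr; last first.
  by rewrite !(@bin_small _ r) ?(@bin_small _ r.+1) ?muln0 //; lia.
case: (leqP s m) => hs; last first.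
  have [-> -> -> ->] : [/\ (m - s = 0)%N, (m.+1 - s = 0)%N, (m.+1 - s.+1 = 0)%N
                          & (m.+2 - s.+1 = 0)%N] by split; lia.
  rewrite !bin0n !muln0 !add0n.
  case: r hr => [|r] _; rewrite ?muln0 // !muln1 addn0 !subn0 !addn1.
  by rewrite binS (@bin_small m.+1 s.+1).
rewrite !subSS !subSn // !addSn.
exact: binomial_product_pascal.
Qed.

Section BivariateSums.
Variables (R : comNzRingType) (a b : R).

Definition bisum (h : nat -> nat -> R) (n : nat) : R :=
  \sum_(0 <= r < n) \sum_(0 <= s < n) h r s * (a ^+ r * b ^+ s).

Definition shift_row (h : nat -> nat -> R) r s : R := if r is r'.+1 then h r' s else 0.
Definition shift_col (h : nat -> nat -> R) r s : R := if s is s'.+1 then h r s' else 0.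

Definition supported (h : nat -> nat -> R) (n : nat) :=
  forall r s, (n <= r)%N \/ (n <= s)%N -> h r s = 0.

Lemma bisumD h g n : bisum h n + bisum g n = bisum (fun r s => h r s + g r s) n.
Proof.
rewrite /bisum -big_split; apply: eq_bigr => r _.
by rewrite -big_split; apply: eq_bigr => s _; rewrite mulrDl.
Qed.

Lemma bisum_widen h n : supported h n -> bisum h n.+1 = bisum h n.
Proof.
move=> hn; rewrite /bisum big_nat_recr //= [X in _ + X]big1 => [|s _]; last first.
  by rewrite hn ?mul0r //; left.
rewrite addr0; apply: eq_bigr => r _.
by rewrite big_nat_recr //= hn ?mul0r ?addr0 //; right.
Qed.

Lemma supported_shift_col h n : supported h n -> supported (shift_col h) n.+1.
Proof. by move=> hn r [|s] //= hrs; apply: hn; lia. Qed.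

Lemma mul_bisum_row h n : supported h n -> a * bisum h n = bisum (shift_row h) n.+1.
Proof.
move=> hn; rewrite /bisum big_nat_recl // [X in X + _]big1 ?add0r => [|s _]; last first.
  by rewrite mul0r.
rewrite mulr_sumr; apply: eq_bigr => r _.
rewrite big_nat_recr //= hn ?mul0r ?addr0; last by right.
by rewrite mulr_sumr; apply: eq_bigr => s _; rewrite exprS; ring.
Qed.

Lemma mul_bisum_col h n : supported h n -> b * bisum h n = bisum (shift_col h) n.+1.
Proof.
move=> hn; rewrite /bisum [RHS]big_nat_recr //=.
rewrite [X in _ + X]big1 ?addr0 => [|s _]; last first.
  by case: s => [|s]; rewrite /= ?mul0r // hn ?mul0r //; left.
rewrite mulr_sumr; apply: eq_bigr => r _.
rewrite big_nat_recl // mul0r add0r mulr_sumr; apply: eq_bigr => s _.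
by rewrite /= exprS; ring.
Qed.

Definition solves_rec (u : nat -> R) :=
  forall n, u n.+2 + a * b * u n = (1 + a + b) * u n.+1.

Lemma solves_recD u v :
  solves_rec u -> solves_rec v -> solves_rec (fun n => u n + v n).
Proof. by move=> hu hv n; rewrite [RHS]mulrDr -hu -hv; ring. Qed.

Lemma solves_rec_geom c l :
  l ^+ 2 + a * b = (1 + a + b) * l -> solves_rec (fun n => c * l ^+ n).
Proof.
move=> hl n; transitivity (c * l ^+ n * (l ^+ 2 + a * b)).
  by rewrite -addn2 exprD; ring.
by rewrite hl exprS; ring.
Qed.

Lemma eq_solves_rec u v :
  solves_rec u -> solves_rec v -> u 0 = v 0 -> u 1 = v 1 -> u =1 v.
Proof.
move=> hu hv h0 h1 n; suff [] : u n = v n /\ u n.+1 = v n.+1 by [].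
elim: n => [|n [ihn ihSn]] //; split => //.
by apply: (addIr (a * b * u n)); rewrite hu ihSn ihn hv.
Qed.

Definition binprod_sum m := bisum (fun r s => (binprod m r s)%:R) m.+2.

Lemma supported_binprod m : supported (fun r s => (binprod m r s)%:R) m.+2.
Proof. by move=> r s hrs; rewrite binprod_eq0 // ?xpair_eqE; lia. Qed.

Lemma binprod_sum_rec : solves_rec binprod_sum.
Proof.
move=> m; have hm := @supported_binprod m; have hm1 := @supported_binprod m.+1.
rewrite /binprod_sum -mulrA (mul_bisum_col hm) (mul_bisum_row (supported_shift_col hm)).
rewrite !mulrDl mul1r (mul_bisum_row hm1) (mul_bisum_col hm1) -(bisum_widen hm1).
rewrite !bisumD; apply: eq_bigr => r _; apply: eq_bigr => s _; congr (_ * _).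
case: r => [|r]; case: s => [|s]; rewrite /= ?addr0 -?natrD; congr _%:R.
- by rewrite !binprod0s binS addnC.
- by rewrite !binprodr0 binS.
- exact: binprod_pascal.
Qed.

Lemma binprod_sum0 : binprod_sum 0 = 1 + b.
Proof.
by rewrite /binprod_sum /bisum !big_nat_recr //= !big_geq // /binprod;
  do ! rewrite binE /=; ring.
Qed.

Lemma binprod_sum1 : binprod_sum 1 = 1 + a + b *+ 2 + b ^+ 2.
Proof.
by rewrite /binprod_sum /bisum !big_nat_recr //= !big_geq // /binprod;
  do ! rewrite binE /=; ring.
Qed.

Lemma binprod_sum_split m :
  binprod_sum m =
    \sum_(0 <= r < m.+1) \sum_(0 <= s < (m - r).+1) (binprod m r s)%:R * (a ^+ r * b ^+ s)
    + b ^+ m.+1.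
Proof.
rewrite /binprod_sum /bisum big_nat_recr //=.
rewrite [X in _ + X]big1 ?addr0 => [|s _]; last first.
  by rewrite binprod_eq0 ?mul0r //; lia.
under eq_big_nat => r /andP[_ hr].
  rewrite (@big_cat_nat _ _ _ (m - r).+1) //=; last by lia.
over.
rewrite big_split /=; congr (_ + _).
rewrite big_nat_recl // subn0 big_nat1 binprod0s binn mul1r expr0 mul1r.
rewrite big1 ?addr0 // => r _.
rewrite big_nat_cond big1 // => s /andP[/andP[hs _] _].
by rewrite binprod_eq0 ?mul0r //; lia.
Qed.

End BivariateSums.

Section ClosedForm.
Variables (F : fieldType) (x y : F).
Hypotheses (hx : 1 - x != 0) (hy : 1 - y != 0) (hxy : 1 - x * y != 0).

Let w := ((1 - x) * (1 - y))^-1.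
Let a := x * w.
Let b := y * w.

Definition closed_form n :=
  (1 - x) / (1 - x * y) * w * w ^+ n
  + x * (1 - y) / (1 - x * y) * (x * y * w) * (x * y * w) ^+ n.

Lemma closed_form_rec : solves_rec a b closed_form.
Proof.
apply: solves_recD; apply: solves_rec_geom; rewrite /a /b /w.
  by field; rewrite hx hy.
by field; rewrite hx hy.
Qed.

Lemma binprod_sum_closed_form : binprod_sum a b =1 closed_form.
Proof.
apply: eq_solves_rec; [exact: binprod_sum_rec | exact: closed_form_rec | |].
  by rewrite binprod_sum0 /closed_form /b /w; field; rewrite hx hy hxy.
by rewrite binprod_sum1 /closed_form /a /b /w; field; rewrite hx hy hxy.
Qed.

Lemma scaled_monomial r s :
  x ^+ r * y ^+ s / ((1 - x) ^+ (r + s) * (1 - y) ^+ (r + s)) = a ^+ r * b ^+ s.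
Proof.
by rewrite /a /b /w -exprMn -exprVn exprD !exprMn; ring.
Qed.

Theorem binomial_double_sum m :
  \sum_(0 <= r < m.+1) \sum_(0 <= s < (m - r).+1)
     ('C(m - r + 1, s) * 'C(m - s, r))%:R * (x ^+ r * y ^+ s)
       / ((1 - x) ^+ (r + s) * (1 - y) ^+ (r + s))
  = (1 - x ^+ (m + 2) * y ^+ (m + 2) - x * (1 - x ^+ (m + 1) * y ^+ (m + 1))
       - (1 - x * y) * y ^+ (m + 1))
    / ((1 - x * y) * (1 - x) ^+ (m + 1) * (1 - y) ^+ (m + 1)).
Proof.
under eq_bigr do under eq_bigr do rewrite -mulrA scaled_monomial.
apply: (addIr (b ^+ m.+1)).
rewrite -binprod_sum_split binprod_sum_closed_form /closed_form /b /w.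
rewrite !exprMn !exprVn !exprMn !addn2 !addn1 !exprS.
have hxm : (1 - x) ^+ m != 0 by rewrite expf_neq0.
have hym : (1 - y) ^+ m != 0 by rewrite expf_neq0.
move: hxm hym; move: ((1 - x) ^+ m) ((1 - y) ^+ m) (x ^+ m) (y ^+ m) => U V P Q hU hV.
by field; rewrite hx hy hxy hU hV.
Qed.

End ClosedForm.

Lemma one_sub_poly_neq0 (R : nzRingType) (p : {poly R}) : p`_0 = 0 -> 1 - p != 0.
Proof.
move=> p0; apply/eqP => /(congr1 (coefp 0)) /eqP.
by rewrite /= coefB coef1 p0 subr0 coef0 oner_eq0.
Qed.

Lemma one_subX_neq0 : 1 - X != 0.
Proof.
by rewrite /X -tofrac1 -rmorphB tofrac_eq0 -polyCB polyC_eq0 one_sub_poly_neq0 // coefX.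
Qed.

Lemma one_subY_neq0 : 1 - Y != 0.
Proof. by rewrite /Y -tofrac1 -rmorphB tofrac_eq0 one_sub_poly_neq0 // coefX. Qed.

Lemma one_subXY_neq0 : 1 - X * Y != 0.
Proof.
by rewrite /X /Y -rmorphM -tofrac1 -rmorphB tofrac_eq0 one_sub_poly_neq0 // coefMX.
Qed.

Theorem corollary2p5 (m : nat) :
  \sum_(0 <= r < m.+1) \sum_(0 <= s < (m - r).+1)
     ('C(m - r + 1, s) * 'C(m - s, r))%:R * (X ^+ r * Y ^+ s)
       / ((1 - X) ^+ (r + s) * (1 - Y) ^+ (r + s))
  = (1 - X ^+ (m + 2) * Y ^+ (m + 2) - X * (1 - X ^+ (m + 1) * Y ^+ (m + 1))
       - (1 - X * Y) * Y ^+ (m + 1))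
    / ((1 - X * Y) * (1 - X) ^+ (m + 1) * (1 - Y) ^+ (m + 1)) :> Qfxy.
Proof. exact: binomial_double_sum one_subX_neq0 one_subY_neq0 one_subXY_neq0 m. Qed.
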